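(* Let $N,w,h$ be positive integers with $N/h\leq w\leq N-h+1$, and let $$f_N(w,h)=\max\Big\{\sum_{l=1}^{|\Lambda|}N_l^2\ :\ \Lambda \text{ a partition of }\{1,\dots,N\}\text{ with }\max\Lambda\leq w,\ |\Lambda|\geq h\Big\}.$$ Then $f_N(w,h)\leq w(N-h)+N$.
   Context: A partition $\Lambda=\{A_1,\dots,A_{|\Lambda|}\}$ of $\{1,\dots,N\}$ is a collection of nonempty pairwise disjoint subsets whose union is $\{1,\dots,N\}$; $|\Lambda|$ is the number of subsets, $N_l=|A_l|$, and $\max\Lambda=\max_lN_l$. *)

From mathcomp Require Import all_boot.
Set Implicit Arguments. Unset Strict Implicit. Unset Printing Implicit Defensive.

(* A partition of {1..N} is modelled as a partition of the finite type 'I_N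
   (mathcomp's [partition P D]: blocks nonempty, pairwise disjoint, covering D). *)
Definition is_partition (N : nat) (P : {set {set 'I_N}}) : bool :=
  partition P [set: 'I_N].

Definition maxblock (N : nat) (P : {set {set 'I_N}}) : nat :=
  \max_(A in P) #|A|.

Definition sqsum (N : nat) (P : {set {set 'I_N}}) : nat :=
  \sum_(A in P) #|A| ^ 2.

(* f_N(w,h): max over partitions with max block <= w and at least h blocks
   (0 if there is no such partition). *)
Definition fN (N w h : nat) : nat :=
  \max_(P : {set {set 'I_N}} | is_partition P && (maxblock P <= w) && (h <= #|P|))
     sqsum P.

From mathcomp Require Import all_boot.
From mathcomp Require Import zify.

Set Implicit Arguments.
Unset Strict Implicit.
Unset Printing Implicit Defensive.

(* A block of size a <= w contributes a^2 = a(a-1) + a <= w(a-1) + a, and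
   summing a - 1 over the blocks of a partition of an N-set with k blocks
   gives N - k; hence the sum of squares is at most w(N - k) + N, which only
   decreases as k grows past h. *)

Lemma sqrn_le_mul_pred (a w : nat) : a <= w -> a ^ 2 <= w * a.-1 + a.
Proof. by case: a => [|a] //=; nia. Qed.

Section PartitionSums.

Variables (T : finType) (P : {set {set T}}) (D : {set T}).
Hypothesis partP : partition P D.

Lemma sum_pred_card_partition : \sum_(A in P) #|A|.-1 = #|D| - #|P|.
Proof.
have blockP A : A \in P -> 0 < #|A|.
  by move=> AP; rewrite card_gt0; apply: contraTneq AP => ->; case/and3P: partP.
rewrite (card_partition partP).
have -> : \sum_(A in P) #|A| = \sum_(A in P) (#|A|.-1 + 1).
  by apply: eq_bigr => A /blockP; rewrite addn1 => /prednK.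
by rewrite big_split /= sum1_card addnK.
Qed.

Lemma sum_sqr_card_partition_le (w : nat) :
  {in P, forall A : {set T}, #|A| <= w} ->
  \sum_(A in P) #|A| ^ 2 <= w * (#|D| - #|P|) + #|D|.
Proof.
move=> le_w; rewrite -sum_pred_card_partition big_distrr /=.
rewrite (card_partition partP) -big_split /=.
by apply: leq_sum => A /le_w /sqrn_le_mul_pred.
Qed.

End PartitionSums.

Theorem lemma2 (N w h : nat) :
  0 < N -> 0 < w -> 0 < h ->
  N <= w * h -> w <= N - h + 1 ->
  fN N w h <= w * (N - h) + N.
Proof.
move=> _ _ _ _ _; apply/bigmax_leqP => P /andP[/andP[partP le_max] le_h].
rewrite /sqsum.
have le_w : {in P, forall A : {set 'I_N}, #|A| <= w}.
  by move=> A AP; apply: leq_trans _ le_max; rewrite /maxblock (bigmax_sup A).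
apply: leq_trans (sum_sqr_card_partition_le partP le_w) _.
by rewrite cardsT card_ord leq_add2r leq_mul2l leq_sub2l ?orbT.
Qed.
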